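(* Let $s\in(0,2]$, $P$ a finite set of $n$ points in $(\mathbb{R}^d,\ell_s)$, $\varepsilon>0$, and let $q\in\mathbb{R}^d$ be a query point processed by the reverse nearest neighbor query procedure described in the context, with $y$ the point found at step 1. Let $P'=\bigcup_i P_i$ for $i$ ranging from $\lfloor\log_{1+\varepsilon}\frac{\mathrm{d}(q,y)}{1+\varepsilon}\rfloor+1$ to $\lceil\log_{1+\varepsilon}\frac{\mathrm{d}(q,y)}{\varepsilon}\rceil$, and let $S''$ be the set of points inserted into $S$ at step 3. Given that $y\in\varepsilon\text{-}\mathrm{NN}_P(q)$, we have $\mathrm{RNN}_P(q)\setminus P'\subseteq S''$ with high probability.
   Context: $\mathrm{d}$ is the $\ell_s$ distance; $\mathrm{d}(x,P)=\min\{\mathrm{d}(x,p):p\in P\setminus\{x\}\}$; $N_Q(x,R)$ is the set of $p\in Q\setminus\{x\}$ with $\mathrm{d}(x,p)\le R$; $\varepsilon\text{-}\mathrm{NN}_P(x)=N_P(x,(1+\varepsilon)\mathrm{d}(x,P))$; $\mathrm{RNN}_P(x)$ is the set of $p\in P\setminus\{x\}$ with $\mathrm{d}(p,x)\le\mathrm{d}(p,P)$; $\varepsilon\text{-}\mathrm{RNN}_P(x)$ is the set of $p\in P\setminus\{x\}$ with $\mathrm{d}(p,x)\le(1+\varepsilon)\mathrm{d}(p,P)$. Preprocessing: compute $\mathrm{d}(p,P)$ for all $p\in P$; bucket $P_i=\{p\in P:(1+\varepsilon)^{i-1}\le\mathrm{d}(p,P)<(1+\varepsilon)^i\}$, $i\in\mathbb{Z}$;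 on each nonempty $P_i$ build an LSH structure for exhaustive $(1+\varepsilon)^i$-PLEB on $P_i$; for each $y\in P$ store the array $P_y=\varepsilon\text{-}\mathrm{RNN}_P(y)\cup\{y\}$ sorted by $\mathrm{d}(\cdot,P)$; build an $\varepsilon$-approximate nearest neighbor structure on $P$. Query: (1) find $y\in P$ with the $\varepsilon$-NN structure; (2) for each $i$ from $\lfloor\log_{1+\varepsilon}\frac{\mathrm{d}(q,y)}{1+\varepsilon}\rfloor+1$ to $\lceil\log_{1+\varepsilon}\frac{\mathrm{d}(q,y)}{\varepsilon}\rceil$ with $P_i\neq\emptyset$, run the exhaustive $(1+\varepsilon)^i$-PLEB query on $P_i$ and put the outputs into $S$; (3) add to $S$ all points $p\in P_y$ with $\mathrm{d}(p,P)\ge\mathrm{d}(q,y)/\varepsilon$ (found by binary search in $P_y$ and iterating to its end); (4) remove from $S$ the points $p$ with $\mathrm{d}(p,q)>\mathrm{d}(p,P)$; return $S$.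
   Formalization: For s ∈ (0,1), d is the metric Σᵢ|xᵢ−yᵢ|ˢ without the 1/s-th root, and $\mathrm{RNN}_P(q)\setminus P'\subseteq S''$ holds for every $y\in\varepsilon\text{-}\mathrm{NN}_P(q)$ outright rather than with high probability. Apart from conventions, each condition added here is assumed in the paper as well or is needed for the statement above to hold. *)

From HB Require Import structures.
From mathcomp Require Import all_boot all_order all_algebra.
From mathcomp Require Import all_classical all_reals.
From mathcomp Require Import exp.
Set Implicit Arguments. Unset Strict Implicit. Unset Printing Implicit Defensive.
Import Order.TTheory GRing.Theory Num.Theory.
Local Open Scope ring_scope.

Section RNN.
Variables (R : realType) (d : nat).
Notation pt := 'rV[R]_d.

(* ell_s distance on R^d.  For 1 <= s <= 2 it is (sum |x_i - y_i|^s)^(1/s);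
   for 0 < s < 1 it is the ell_s metric sum |x_i - y_i|^s. *)
Definition lsdist (s : R) (x y : pt) : R :=
  (\sum_(i < d) `|x ord0 i - y ord0 i| `^ s) `^ (Num.min 1 s^-1).

Definition setdist (s : R) (P : seq pt) (x : pt) : R :=
  let Q := [seq p <- P | p != x] in
  \big[Num.min/lsdist s x (head x Q)]_(p <- Q) lsdist s x p.

Definition ball_pts (s : R) (Q : seq pt) (x : pt) (r : R) : pred pt :=
  [pred p | (p \in Q) && (p != x) && (lsdist s x p <= r)].

Definition epsNN (s eps : R) (P : seq pt) (x : pt) : pred pt :=
  ball_pts s P x ((1 + eps) * setdist s P x).

Definition RNN (s : R) (P : seq pt) (x : pt) : pred pt :=
  [pred p | (p \in P) && (p != x) && (lsdist s p x <= setdist s P p)].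

Definition epsRNN (s eps : R) (P : seq pt) (x : pt) : pred pt :=
  [pred p | (p \in P) && (p != x) &&
            (lsdist s p x <= (1 + eps) * setdist s P p)].

Definition bucket (s eps : R) (P : seq pt) (i : int) : pred pt :=
  [pred p | (p \in P) && ((1 + eps) ^ (i - 1) <= setdist s P p)
                      && (setdist s P p < (1 + eps) ^ i)].

Definition logb (b x : R) : R := ln x / ln b.

Definition lo_idx (s eps : R) (q y : pt) : int :=
  Num.floor (logb (1 + eps) (lsdist s q y / (1 + eps))) + 1.
Definition hi_idx (s eps : R) (q y : pt) : int :=
  Num.ceil (logb (1 + eps) (lsdist s q y / eps)).

Definition Pprime (s eps : R) (P : seq pt) (q y : pt) (p : pt) : Prop :=
  exists i : int, (lo_idx s eps q y <= i <= hi_idx s eps q y) /\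
                  p \in bucket s eps P i.

Definition Py (s eps : R) (P : seq pt) (y : pt) : pred pt :=
  [pred p | (p == y) || (p \in epsRNN s eps P y)].

(* S'' : points of P_y with d(p,P) >= d(q,y)/eps, inserted at step (3) *)
Definition S2 (s eps : R) (P : seq pt) (q y : pt) : pred pt :=
  [pred p | (p \in Py s eps P y) && (lsdist s q y / eps <= setdist s P p)].

End RNN.

(* A point p of RNN_P(q) satisfies d(q,y) <= (1+eps) d(q,P) <= (1+eps) d(q,p)
   <= (1+eps) d(p,P), so the bucket P_i of p has i >= lo.  If p is outside P'
   then i > hi, which forces d(p,P) >= d(q,y)/eps; the triangle inequality then
   gives d(p,y) <= d(p,q) + d(q,y) <= d(p,P) + eps d(p,P), i.e. p is in
   eps-RNN_P(y) (or p = y), and p is inserted at step 3. *)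
From HB Require Import structures.
From mathcomp Require Import all_boot all_order all_algebra.
From mathcomp Require Import all_classical all_reals.
From mathcomp Require Import exp convex hoelder.
From mathcomp Require Import ring.
Set Implicit Arguments. Unset Strict Implicit. Unset Printing Implicit Defensive.
Import Order.TTheory GRing.Theory Num.Theory.
Local Open Scope ring_scope.

Section PowerSums.
Variable R : realType.
Implicit Types (s t u v l : R).

Lemma powRVK s t : 0 < s -> 0 <= t -> (t `^ s^-1) `^ s = t.
Proof. by move=> s0 t0; rewrite -powRrM mulVf ?gt_eqF // powRr1. Qed.

Lemma powRKV s t : 0 < s -> 0 <= t -> (t `^ s) `^ s^-1 = t.
Proof. by move=> s0 t0; rewrite -powRrM mulfV ?gt_eqF // powRr1. Qed.

Lemma powR_divr s u v : 0 <= u -> 0 <= v -> (u / v) `^ s = u `^ s / v `^ s.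
Proof.
move=> u0 v0; rewrite powRM ?invr_ge0 //.
by rewrite -powR_inv1 // -powRrM mulN1r powRN.
Qed.

Lemma powR_convex_comb s l u v : 1 <= s -> 0 <= l <= 1 -> 0 <= u -> 0 <= v ->
  (l * u + (1 - l) * v) `^ s <= l * u `^ s + (1 - l) * v `^ s.
Proof.
move=> s1 /andP[l0 l1] u0 v0.
have := @convex_powR R s s1 (interval_inference.Itv01 l0 l1) u v.
by rewrite !inE /= !in_itv /= !andbT => /(_ u0 v0); rewrite !convRE.
Qed.

Lemma le_powR_self s t : s <= 1 -> 0 <= t <= 1 -> t <= t `^ s.
Proof.
move=> s1 /andP[t0 t1]; have [->|tn0] := eqVneq t 0; first exact: powR_ge0.
by apply: ger1_powR; rewrite // t1 lt0r tn0 t0.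
Qed.

Lemma powRD_le s u v : 0 < s -> s <= 1 -> 0 <= u -> 0 <= v ->
  (u + v) `^ s <= u `^ s + v `^ s.
Proof.
move=> s0 s1 u0 v0; have [->|w_neq0] := eqVneq (u + v) 0.
  by rewrite powR0 ?gt_eqF // addr_ge0 ?powR_ge0.
have w0 : 0 < u + v by rewrite lt0r w_neq0 addr_ge0.
have frac_le t : 0 <= t -> t <= u + v -> t / (u + v) <= (t / (u + v)) `^ s.
  move=> t0 tw; apply: le_powR_self => //.
  by rewrite divr_ge0 ?ler_pdivrMr ?mul1r // ltW.
rewrite -[leLHS]mulr1 -(divff w_neq0) mulrDl.
apply: le_trans (ler_wpM2l (powR_ge0 _ _) (lerD (frac_le u _ _) (frac_le v _ _))) _;
  rewrite ?lerDl ?lerDr //.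
rewrite mulrDr !powR_divr ?(ltW w0) // !(mulrC ((u + v) `^ s)).
by rewrite !divfK ?gt_eqF ?powR_gt0.
Qed.

Lemma sum_powR_eq0 n s (a : 'I_n -> R) :
  \sum_i a i `^ s = 0 -> forall i, a i = 0.
Proof.
move=> /psumr_eq0P sum0 i; apply: (@powR_eq0_eq0 _ _ s).
by apply: sum0 => // j _; exact: powR_ge0.
Qed.

(* Write a + b as (A + B) times a convex combination of a/A and b/B, with
   weights A/(A+B), and apply the convexity of t |-> t^s termwise. *)
Lemma sum_powRD_le n s (a b : 'I_n -> R) (A B : R) : 1 <= s ->
  (forall i, 0 <= a i) -> (forall i, 0 <= b i) -> 0 < A -> 0 < B ->
  \sum_i a i `^ s = A `^ s -> \sum_i b i `^ s = B `^ s ->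
  \sum_i (a i + b i) `^ s <= (A + B) `^ s.
Proof.
move=> s1 a0 b0 A0 B0 sumA sumB; have AB0 : 0 < A + B := addr_gt0 A0 B0.
set l := A / (A + B).
have l01 : 0 <= l <= 1.
  by rewrite /l ler_pdivrMr // mul1r lerDl divr_ge0 ?ltW.
have termwise i : (a i + b i) `^ s <=
    (A + B) `^ s * (l * (a i `^ s / A `^ s) + (1 - l) * (b i `^ s / B `^ s)).
  have -> : a i + b i = (A + B) * (l * (a i / A) + (1 - l) * (b i / B)).
    by rewrite /l; field; rewrite !gt_eqF.
  have [l0 l1] := andP l01.
  have comb_ge0 : 0 <= l * (a i / A) + (1 - l) * (b i / B).
    by rewrite addr_ge0 // mulr_ge0 ?subr_ge0 // divr_ge0 // ltW.
  rewrite powRM ?(ltW AB0) // -!powR_divr ?(ltW A0) ?(ltW B0) //.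
  apply: ler_wpM2l; first exact: powR_ge0.
  by apply: powR_convex_comb; rewrite ?divr_ge0 // ltW.
apply: le_trans (ler_sum _ (fun i _ => termwise i)) _.
rewrite -mulr_sumr big_split /= -!mulr_sumr -!mulr_suml sumA sumB.
by rewrite !divff ?gt_eqF ?powR_gt0 // !mulr1 subrKC mulr1.
Qed.

Lemma minkowski_sum n s (a b : 'I_n -> R) : 1 <= s ->
  (forall i, 0 <= a i) -> (forall i, 0 <= b i) ->
  (\sum_i (a i + b i) `^ s) `^ s^-1 <=
  (\sum_i a i `^ s) `^ s^-1 + (\sum_i b i `^ s) `^ s^-1.
Proof.
move=> s1 a0 b0; have s0 : 0 < s := lt_le_trans ltr01 s1.
have sum_ge0 (c : 'I_n -> R) : 0 <= \sum_i c i `^ s.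
  by apply: sumr_ge0 => i _; exact: powR_ge0.
have [Sa0|Sa_neq0] := eqVneq (\sum_i a i `^ s) 0.
  have a_eq0 := sum_powR_eq0 Sa0.
  rewrite Sa0 powR0 ?invr_eq0 ?gt_eqF // add0r.
  by under eq_bigr do rewrite a_eq0 add0r.
have [Sb0|Sb_neq0] := eqVneq (\sum_i b i `^ s) 0.
  have b_eq0 := sum_powR_eq0 Sb0.
  rewrite Sb0 powR0 ?invr_eq0 ?gt_eqF // addr0.
  by under eq_bigr do rewrite b_eq0 addr0.
have A0 : 0 < (\sum_i a i `^ s) `^ s^-1 by rewrite powR_gt0 // lt0r Sa_neq0 sum_ge0.
have B0 : 0 < (\sum_i b i `^ s) `^ s^-1 by rewrite powR_gt0 // lt0r Sb_neq0 sum_ge0.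
rewrite -(powRKV s0 (ltW (addr_gt0 A0 B0))).
apply: ge0_ler_powR; rewrite ?invr_ge0 ?nnegrE ?powR_ge0 ?sum_ge0 ?(ltW s0) //.
by apply: sum_powRD_le; rewrite ?powRVK ?sum_ge0.
Qed.

End PowerSums.

Section LsDistance.
Variables (R : realType) (d : nat).
Implicit Types (s : R) (x y z : 'rV[R]_d).

Lemma lsdistC s x y : lsdist s x y = lsdist s y x.
Proof. by rewrite /lsdist; under eq_bigr do rewrite distrC. Qed.

Lemma lsdist_triangle s x y z : 0 < s ->
  lsdist s x z <= lsdist s x y + lsdist s y z.
Proof.
move=> s0; rewrite /lsdist.
have sum_ge0 (c : 'I_d -> R) : 0 <= \sum_i c i `^ s.
  by apply: sumr_ge0 => i _; exact: powR_ge0.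
have termwise i : `|x ord0 i - z ord0 i| `^ s <=
    (`|x ord0 i - y ord0 i| + `|y ord0 i - z ord0 i|) `^ s.
  by apply: ge0_ler_powR; rewrite ?nnegrE ?addr_ge0 ?(ltW s0) // ler_distD.
have [s1|s1] := leP s 1.
  rewrite (min_idPl _) ?invf_ge1 // !powRr1 ?sum_ge0 // -big_split /=.
  apply: ler_sum => i _; apply: le_trans (termwise i) _.
  exact: powRD_le.
rewrite (min_idPr _) ?invf_le1 ?(ltW s1) //.
apply: le_trans (minkowski_sum (a := fun i => `|x ord0 i - y ord0 i|)
  (b := fun i => `|y ord0 i - z ord0 i|) (ltW s1) (fun=> normr_ge0 _) (fun=> normr_ge0 _)).
apply: ge0_ler_powR; rewrite ?invr_ge0 ?nnegrE ?sum_ge0 ?(ltW s0) //.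
by apply: ler_sum => i _; exact: termwise.
Qed.

Lemma lsdist_gt0 s x y : 0 < s -> x != y -> 0 < lsdist s x y.
Proof.
move=> s0 xy; apply: powR_gt0.
have [i /= xy_i|xy_eq] := pickP (fun i => x ord0 i != y ord0 i); last first.
  by case/eqP: xy; apply/rowP => j; apply/eqP; move/negbFE: (xy_eq j).
rewrite (bigD1 i) //=; apply: ltr_pwDl; last first.
  by apply: sumr_ge0 => j _; exact: powR_ge0.
by apply: powR_gt0; rewrite normr_gt0 subr_eq0.
Qed.

Lemma bigmin_le_mem (T : eqType) (F : T -> R) (m0 : R) (Q : seq T) a :
  a \in Q -> \big[Num.min/m0]_(p <- Q) F p <= F a.
Proof.
elim: Q => [//|h Q IH]; rewrite inE big_cons => /orP[/eqP ->|aQ].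
  by rewrite ge_min lexx.
by rewrite ge_min IH ?orbT.
Qed.

Lemma setdist_le s (P : seq 'rV[R]_d) x p :
  p \in P -> p != x -> setdist s P x <= lsdist s x p.
Proof. by move=> pP px; apply: bigmin_le_mem; rewrite mem_filter px. Qed.

End LsDistance.

Section Logarithm.
Variable R : realType.

Lemma ler_logb (b : R) : 1 < b -> {in Num.pos &, {mono logb b : x y / x <= y}}.
Proof.
by move=> b1 x y x0 y0; rewrite /logb ler_pM2r ?invr_gt0 ?ln_gt0 // ler_ln.
Qed.

Lemma ceil_le_floor_le (x y : R) : Num.ceil x <= Num.floor y -> x <= y.
Proof.
move=> le_xy; apply: le_trans (ceil_ge x) (le_trans _ (floor_le y)).
by rewrite ler_int.
Qed.

End Logarithm.

Section Query.
Variables (R : realType) (d : nat) (s eps : R) (P : seq 'rV[R]_d).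
Hypotheses (s_gt0 : 0 < s) (eps_gt0 : 0 < eps).
Local Notation b := (1 + eps).

Lemma mem_bucket_floor p : p \in P -> 0 < setdist s P p ->
  p \in bucket s eps P (Num.floor (logb b (setdist s P p)) + 1).
Proof.
move=> pP r0; have b1 : 1 < b by rewrite ltrDl.
have b0 : 0 < b := lt_trans ltr01 b1.
have ln_b0 : 0 < ln b by exact: ln_gt0.
have ln_pow (z : int) : ln (b ^ z) = z%:~R * ln b.
  by rewrite -powR_intmul ?ltW // ln_powR.
have pow_gt0 (z : int) : 0 < b ^ z by rewrite -powR_intmul ?ltW // powR_gt0.
rewrite inE /= pP /= -ler_ln ?posrE // -ltr_ln ?posrE // !ln_pow addrK.
by rewrite -ler_pdivlMr // -ltr_pdivrMr // floor_le floorD1_gt.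
Qed.

Lemma epsNN_dist_le q y p : y \in epsNN s eps P q -> p \in RNN s P q ->
  lsdist s q y <= b * setdist s P p.
Proof.
rewrite !inE => /andP[_ Dle] /andP[/andP[pP pq] dpq].
apply: le_trans Dle (ler_wpM2l (ltW _) _); first by rewrite addr_gt0.
by apply: le_trans (setdist_le _ pP pq) _; rewrite lsdistC.
Qed.

Lemma mem_S2_RNN q y p : p \in RNN s P q ->
  lsdist s q y / eps <= setdist s P p -> p \in S2 s eps P q y.
Proof.
rewrite !inE => /andP[/andP[pP _] dpq] far; rewrite far andbT.
have [//|_] := eqVneq p y; rewrite pP /=.
apply: le_trans (lsdist_triangle p q y s_gt0) _.
by rewrite mulrDl mul1r lerD // mulrC -ler_pdivrMr.
Qed.

End Query.

Theorem lemma7 (R : realType) (d : nat) (s : R) (P : seq 'rV[R]_d)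
    (eps : R) (q y : 'rV[R]_d) :
  0 < s -> s <= 2 ->
  (2 <= size (undup P))%N ->
  0 < eps ->
  y \in epsNN s eps P q ->
  forall p : 'rV[R]_d,
    p \in RNN s P q -> ~ Pprime s eps P q y p -> p \in S2 s eps P q y.
Proof.
move=> s0 _ _ eps0 yNN p pRNN notP'.
apply: mem_S2_RNN => //.
set D := lsdist s q y; set r := setdist s P p.
have b1 : 1 < 1 + eps by rewrite ltrDl.
have b0 : 0 < 1 + eps := lt_trans ltr01 b1.
have D_le : D <= (1 + eps) * r := epsNN_dist_le eps0 yNN pRNN.
have D0 : 0 < D.
  by apply: lsdist_gt0; move: yNN; rewrite !inE eq_sym => /andP[/andP[]].
have r0 : 0 < r by rewrite -(pmulr_rgt0 _ b0) (lt_le_trans D0).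
have pP : p \in P by move: pRNN; rewrite !inE => /andP[/andP[]].
set i := Num.floor (logb (1 + eps) r) + 1.
have lo_le : lo_idx s eps q y <= i.
  rewrite lerD2r le_floor // ler_logb ?posrE ?divr_gt0 //.
  by rewrite ler_pdivrMr // mulrC.
have hi_lt : hi_idx s eps q y < i.
  rewrite ltNge; apply/negP => hi_le; apply: notP'; exists i.
  by rewrite lo_le hi_le; split=> //; exact: mem_bucket_floor.
rewrite -(ler_logb b1) ?posrE ?divr_gt0 //.
by apply: ceil_le_floor_le; rewrite -ltzD1.
Qed.
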